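(* Let $(X,d)$ be a proper geodesic metric space with a distinguished base point $0$, and let $(x_n)$ and $(y_n)$ be sequences in $X$ which both converge to the same point $\omega\in\partial_d X$ of the metric boundary. Then $\lim_{n\to\infty}(x_n\cdot y_n)=\infty$.
   Context: A metric space is proper if closed bounded sets are compact, and geodesic if any two points $x,y$ are joined by an isometric image of $[0,d(x,y)]$. The Gromov product with respect to the base point $0$ is $(x\cdot y)=\tfrac12\big(d(x,0)+d(y,0)-d(x,y)\big)$. For $y\in X$ let $\varphi_y(x)=d(x,0)-d(x,y)$. The metric compactification $\overline{X}^d$ is the maximal ideal space of the commutative unital C*-algebra generated by the continuous functions vanishing at infinity on $X$, the constants, and the functions $\varphi_y$ ($y\in X$); the metric boundary is $\partial_d X=\overline{X}^d\setminus X$. Concretely, a sequence $(x_n)$ in $X$ converges to a point of $\partial_d X$ iff it eventually leaves every compact subset of $X$ and $\varphi_y(x_n)$ converges for every $y\in X$; two such sequences converge to the same boundary point iff the limits of $\varphi_z$ along them agree for every $z\in X$. *)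

From Stdlib Require Import Reals List.
From Coquelicot Require Import Coquelicot.
Open Scope R_scope.

Definition is_metric {X : Type} (d : X -> X -> R) : Prop :=
  (forall x y : X, d x y = 0 <-> x = y) /\
  (forall x y : X, d x y = d y x) /\
  (forall x y z : X, d x z <= d x y + d y z).

Section MetricNotions.
Context {X : Type} (d : X -> X -> R).

Definition m_open (U : X -> Prop) : Prop :=
  forall x, U x -> exists e, 0 < e /\ forall y, d x y < e -> U y.

Definition m_closed (F : X -> Prop) : Prop :=
  m_open (fun x => ~ F x).

Definition m_bounded (B : X -> Prop) : Prop :=
  exists (c : X) (r : R), forall x, B x -> d c x <= r.

Definition m_compact (K : X -> Prop) : Prop :=
  forall (I : Type) (U : I -> X -> Prop),
    (forall i, m_open (U i)) ->
    (forall x, K x -> exists i, U i x) ->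
    exists l : list I, forall x, K x -> exists i, In i l /\ U i x.

Definition m_proper : Prop :=
  forall K : X -> Prop, m_closed K -> m_bounded K -> m_compact K.

Definition m_geodesic : Prop :=
  forall x y : X, exists g : R -> X,
    g 0 = x /\ g (d x y) = y /\
    forall s t, 0 <= s <= d x y -> 0 <= t <= d x y -> d (g s) (g t) = Rabs (s - t).

Variable o : X.

Definition gromov (x y : X) : R := (d x o + d y o - d x y) / 2.

Definition phi (y x : X) : R := d x o - d x y.

Definition leaves_compacts (u : nat -> X) : Prop :=
  forall K : X -> Prop, m_compact K ->
    exists N : nat, forall n, (N <= n)%nat -> ~ K (u n).

(* A point of the metric boundary is determined by the family of limits
   (lim phi_z(x_n))_{z in X}; we represent it by this function w : X -> R. *)
Definition conv_boundary (u : nat -> X) (w : X -> R) : Prop :=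
  leaves_compacts u /\ forall z : X, is_lim_seq (fun n => phi z (u n)) (w z).

End MetricNotions.

(* The Gromov product dominates phi_p on average:
   2 (x.y) >= phi_p(x) + phi_p(y) for every p, by the triangle inequality
   through p.  So it suffices that the common limit w of phi_p along the two
   sequences is unbounded above.  Given t >= 0, take z_n on a geodesic from 0
   to x_n with d(0, z_n) = t; then phi_{z_n}(x_n) = t as soon as d(0, x_n) >= t,
   which holds eventually since x_n leaves the compact ball of radius t.  The
   z_n lie in that ball, so they accumulate at some p, and since phi is
   1-Lipschitz in its index, w(p) >= t - 1. *)

From Stdlib Require Import Reals.
From Coquelicot Require Import Coquelicot.
From Stdlib Require Import Lra Lia List Classical ClassicalEpsilon.
Open Scope R_scope.

Lemma is_lim_seq_eventually_near (u : nat -> R) (l eps : R) :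
  0 < eps -> is_lim_seq u l ->
  exists N, forall n, (N <= n)%nat -> l - eps < u n < l + eps.
Proof.
  intros Heps Hu. apply is_lim_seq_spec in Hu.
  destruct (Hu (mkposreal eps Heps)) as [N HN]. exists N. intros n Hn.
  specialize (HN n Hn). simpl in HN. apply Rabs_def2 in HN. lra.
Qed.

Section Metric.
Variables (X : Type) (d : X -> X -> R).
Hypothesis Hmetric : is_metric d.

Lemma d_refl a : d a a = 0.
Proof. destruct Hmetric as [Hd _]. now apply Hd. Qed.

Lemma d_sym a b : d a b = d b a.
Proof. destruct Hmetric as [_ [Hs _]]. apply Hs. Qed.

Lemma d_triangle a b c : d a c <= d a b + d b c.
Proof. destruct Hmetric as [_ [_ Ht]]. apply Ht. Qed.

Lemma d_nonneg a b : 0 <= d a b.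
Proof.
  pose proof (d_triangle a b a). rewrite d_refl, (d_sym b a) in H. lra.
Qed.

Lemma closed_ball_closed (c : X) (t : R) : m_closed d (fun a => d c a <= t).
Proof.
  intros a Ha. apply Rnot_le_lt in Ha. exists (d c a - t). split; [lra|].
  intros b Hb Hcb. pose proof (d_triangle c b a). rewrite (d_sym b a) in H. lra.
Qed.

Lemma compact_seq_cluster (K : X -> Prop) (z : nat -> X) :
  m_compact d K -> (forall n, K (z n)) ->
  exists p, K p /\ forall e N, 0 < e -> exists n, (N <= n)%nat /\ d p (z n) < e.
Proof.
  intros HK Hz. apply NNPP. intro Hnone.
  (* ball (p, e) such that z stays e-away from p from index N on *)
  set (U := fun (i : (X * R) * nat) (a : X) =>
    let '(p, e, N) := i in
    0 < e /\ (forall n, (N <= n)%nat -> e <= d p (z n)) /\ d p a < e).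
  destruct (HK _ U) as [l Hl].
  - intros [[p e] N] a [He [HN Ha]].
    exists (e - d p a). split; [lra|]. intros b Hb.
    repeat split; auto. pose proof (d_triangle p a b). lra.
  - intros a Ka. apply NNPP. intro Hunc. apply Hnone.
    exists a. split; [exact Ka|]. intros e N He.
    apply NNPP. intro Hfar. apply Hunc. exists (a, e, N).
    repeat split; auto.
    + intros n Hn. apply Rnot_lt_le. intro. apply Hfar. now exists n.
    + rewrite d_refl. exact He.
  - set (M := list_max (map snd l)).
    destruct (Hl (z M) (Hz M)) as [[[p e] N] [Hin [_ [HN Hp]]]].
    assert (HNM : (N <= M)%nat).
    { assert (Hall := proj1 (list_max_le (map snd l) M) (le_n M)).
      rewrite Forall_forall in Hall. apply Hall.
      now apply (in_map snd) in Hin. }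
    specialize (HN M HNM). lra.
Qed.

Lemma geodesic_point_at (a b : X) (t : R) :
  m_geodesic d -> 0 <= t <= d a b -> exists z, d a z = t /\ d z b = d a b - t.
Proof.
  intros Hgeod Ht. destruct (Hgeod a b) as [g [Hg0 [Hg1 Hiso]]].
  pose proof (d_nonneg a b). exists (g t). split.
  - rewrite <- Hg0 at 1. rewrite Hiso by lra. rewrite Rabs_left1; lra.
  - rewrite <- Hg1 at 1. rewrite Hiso by lra. rewrite Rabs_left1; lra.
Qed.

Variable o : X.

Lemma gromov_ge_phi (p a b : X) : phi d o p a + phi d o p b <= 2 * gromov d o a b.
Proof.
  unfold phi, gromov. pose proof (d_triangle a p b). rewrite (d_sym p b) in H. lra.
Qed.

Lemma phi_lipschitz_index (p z a : X) : phi d o z a - d z p <= phi d o p a.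
Proof.
  unfold phi. pose proof (d_triangle a z p). lra.
Qed.

Hypotheses (Hproper : m_proper d) (Hgeod : m_geodesic d).

Lemma boundary_limit_unbounded (x : nat -> X) (w : X -> R) :
  conv_boundary d o x w -> forall t, 0 <= t -> exists p, t - 1 <= w p.
Proof.
  intros [Hleave Hlim] t Ht.
  set (K := fun a => d o a <= t).
  assert (HK : m_compact d K).
  { apply Hproper; [apply closed_ball_closed | now exists o, t]. }
  destruct (Hleave K HK) as [N0 HN0].
  assert (Hpoint : forall n, exists z, K z /\ (t <= d o (x n) -> phi d o z (x n) = t)).
  { intro n. destruct (Rle_dec t (d o (x n))) as [Hle | Hgt].
    - destruct (geodesic_point_at o (x n) t Hgeod (conj Ht Hle)) as [z [Hoz Hzx]].
      exists z. split; [unfold K; lra|]. intros _.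
      unfold phi. rewrite (d_sym (x n) o), (d_sym (x n) z). lra.
    - exists o. split; [unfold K; rewrite d_refl; lra | lra]. }
  destruct (choice _ Hpoint) as [z Hz].
  destruct (compact_seq_cluster K z HK (fun n => proj1 (Hz n))) as [p [_ Hp]].
  exists p. apply Rnot_lt_le. intro Hlt.
  destruct (is_lim_seq_eventually_near _ _ ((t - 1 - w p) / 2) ltac:(lra) (Hlim p))
    as [N1 HN1].
  destruct (Hp 1 (N0 + N1)%nat Rlt_0_1) as [n [Hn Hzn]].
  assert (Hfar : t <= d o (x n)).
  { apply Rnot_lt_le. intro. apply (HN0 n ltac:(lia)). unfold K. lra. }
  pose proof (phi_lipschitz_index p (z n) (x n)).
  rewrite (proj2 (Hz n) Hfar), (d_sym (z n) p) in H.
  specialize (HN1 n ltac:(lia)). lra.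
Qed.

End Metric.

Theorem mainTheorem3 (X : Type) (d : X -> X -> R) (o : X)
  (Hmetric : is_metric d) (Hproper : m_proper d) (Hgeod : m_geodesic d)
  (x y : nat -> X) (w : X -> R)
  (Hx : conv_boundary d o x w) (Hy : conv_boundary d o y w) :
  is_lim_seq (fun n => gromov d o (x n) (y n)) p_infty.
Proof.
  apply is_lim_seq_spec. intro M.
  destruct (boundary_limit_unbounded X d Hmetric o Hproper Hgeod x w Hx
              (Rmax 0 (M + 2)) (Rmax_l _ _)) as [p Hp].
  pose proof (Rmax_r 0 (M + 2)).
  destruct (is_lim_seq_eventually_near _ _ 1 Rlt_0_1 (proj2 Hx p)) as [Nx HNx].
  destruct (is_lim_seq_eventually_near _ _ 1 Rlt_0_1 (proj2 Hy p)) as [Ny HNy].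
  exists (Nx + Ny)%nat. intros n Hn.
  specialize (HNx n ltac:(lia)). specialize (HNy n ltac:(lia)).
  pose proof (gromov_ge_phi X d Hmetric o p (x n) (y n)).
  lra.
Qed.
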